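(* For any integer $m\ge1$, the number of graphs on the vertex set $\{1,\dots,n\}$ that are intersection graphs of $n$ numbered axis-parallel boxes in $\mathbb{R}^m$ equals $n^{(2m+o(1))n}$.
   Context: An axis-parallel box in $\mathbb{R}^m$ is a set $\prod_{i=1}^m[\alpha_i,\beta_i]$ with $\alpha_i<\beta_i$. The intersection graph of objects $D_1,\dots,D_n$ is the graph on $\{1,\dots,n\}$ in which $i\neq j$ are adjacent iff $D_i\cap D_j\neq\emptyset$. ''Equals $n^{(c+o(1))n}$'' means equals $n^{(c+\varepsilon(n))n}$ for some function $\varepsilon(n)\to0$ as $n\to\infty$ (for fixed $m$). *)

From mathcomp Require Import all_boot.
From Stdlib Require Import Reals ClassicalEpsilon.
Unset Printing Implicit Defensive.

Definition boxes_intersect (m : nat) (a1 b1 a2 b2 : 'I_m -> R) : Prop :=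
  exists x : 'I_m -> R, forall k : 'I_m,
    (a1 k <= x k <= b1 k)%R /\ (a2 k <= x k <= b2 k)%R.

(* A graph on vertex set 'I_n (= {1..n} shifted to {0..n-1}) is given by its
   set of ordered adjacent pairs E. *)
Definition is_box_graph (m n : nat) (E : {set 'I_n * 'I_n}) : Prop :=
  exists a b : 'I_n -> 'I_m -> R,
    (forall i k, (a i k < b i k)%R) /\
    (forall i j : 'I_n,
        (i, j) \in E <-> (i <> j /\ boxes_intersect m (a i) (b i) (a j) (b j))).

Definition is_box_graph_b (m n : nat) (E : {set 'I_n * 'I_n}) : bool :=
  if excluded_middle_informative (is_box_graph m n E) then true else false.

Definition num_box_graphs (m n : nat) : nat :=
  #|[set E : {set 'I_n * 'I_n} | is_box_graph_b m n E]|.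

From mathcomp Require Import all_boot zify.
From Stdlib Require Import Reals Lra ClassicalEpsilon.

(* Whether two boxes meet depends only on the order, coordinate
   by coordinate, of the 2n endpoint values.  Replacing each endpoint by its
   rank among the endpoints of its coordinate (a number in [0, 2n]) gives a
   code from which the graph is recovered, so N(m, n) <= (2n+1)^(2mn).

   In each coordinate k place 2s disjoint unit "ruler" boxes,
   thin in coordinate k and spread over everything in the others; then add r
   "free" boxes, each choosing in every coordinate a left end among the first
   s rulers and a right end among the last s.  The adjacencies of a free box
   to the rulers recover its choices, so N(m, 2ms + r) >= s^(2mr).  Taking
   s ~ n / (2mt) and r ~ n (1 - 1/t) for a large fixed t yields
   ln N(m, n) >= 2m n (1 - 1/t)(ln n - ln (4mt)). *)

Definition Pb (P : Prop) : bool :=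
  if excluded_middle_informative P then true else false.

Lemma PbP (P : Prop) : reflect P (Pb P).
Proof. by rewrite /Pb; case: excluded_middle_informative => h; constructor. Qed.

Lemma is_box_graphP m n E : reflect (is_box_graph m n E) (is_box_graph_b m n E).
Proof. exact: PbP. Qed.

Lemma INR_leP a b : (INR a <= INR b)%R <-> a <= b.
Proof. by split=> [/INR_le/leP | /leP/le_INR]. Qed.

Lemma INR_ltP a b : (INR a < INR b)%R <-> a < b.
Proof. by split=> [/INR_lt/ltP | /ltP/lt_INR]. Qed.

Lemma INR_expn a b : INR (expn a b) = (INR a ^ b)%R.
Proof. by elim: b => [|b IH]; rewrite ?expn0 // expnS mult_INR IH. Qed.

Lemma ln_le_mono x y : (0 < x)%R -> (x <= y)%R -> (ln x <= ln y)%R.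
Proof.
move=> x_gt0 /Rle_lt_or_eq_dec [lt_xy | ->]; last exact: Rle_refl.
exact/Rlt_le/ln_increasing.
Qed.
Arguments ln_le_mono {x y}.

Lemma ln_INR_pos n : 2 <= n -> (0 < ln (INR n))%R.
Proof. by move=> n_ge2; rewrite -ln_1; apply: ln_increasing; [lra | apply/(INR_ltP 1)]. Qed.

Lemma boxes_intersectP m (a1 b1 a2 b2 : 'I_m -> R) :
  (forall k, a1 k <= b1 k)%R -> (forall k, a2 k <= b2 k)%R ->
  boxes_intersect m a1 b1 a2 b2 <-> forall k, (a1 k <= b2 k /\ a2 k <= b1 k)%R.
Proof.
move=> le1 le2; split; first by case=> x hx k; have := hx k; lra.
move=> overlap; exists (fun k => Rmax (a1 k) (a2 k)) => k.
have := overlap k; have := le1 k; have := le2 k.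
by rewrite /Rmax; case: Rle_dec; lra.
Qed.
Arguments boxes_intersectP {m a1 b1 a2 b2}.

Section Rank.
Variables (T : finType) (pt : T -> R).

Definition rank_below (x : R) : nat := #|[set e | Pb (pt e < x)%R]|.

Lemma rank_below_lt x : rank_below x < #|T|.+1.
Proof. by rewrite ltnS max_card. Qed.

Lemma rank_below_mono u v : (pt u <= pt v)%R <-> rank_below (pt u) <= rank_below (pt v).
Proof.
split=> [le_uv | le_rk].
  apply: subset_leq_card; apply/subsetP => e; rewrite !inE.
  by move/PbP => lt_e; apply/PbP; lra.
case: (Rle_dec (pt u) (pt v)) => // /Rnot_le_lt lt_vu; exfalso.
suff : rank_below (pt v) < rank_below (pt u) by rewrite ltnNge le_rk.
apply: proper_card; apply/properP; split.
  by apply/subsetP => e; rewrite !inE => /PbP lt_e; apply/PbP; lra.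
by exists v; rewrite !inE; [apply/PbP | apply/negP => /PbP; lra].
Qed.
End Rank.
Arguments rank_below {T} pt x.
Arguments rank_below_lt {T} pt x.
Arguments rank_below_mono {T} pt u v.

Section BoxGraph.
Variables m n : nat.
Implicit Types a b : 'I_n -> 'I_m -> R.

Definition box_graph a b : {set 'I_n * 'I_n} :=
  [set ij | (ij.1 != ij.2) && Pb (boxes_intersect m (a ij.1) (b ij.1) (a ij.2) (b ij.2))].

Lemma box_graph_is_box_graph a b :
  (forall i k, a i k < b i k)%R -> is_box_graph_b m n (box_graph a b).
Proof.
move=> lt_ab; apply/is_box_graphP; exists a, b; split=> // i j.
rewrite inE /=; split; first by case/andP => /eqP neq_ij /PbP.
by case=> /eqP neq_ij /PbP meet; rewrite neq_ij.
Qed.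

Lemma is_box_graph_witness E : is_box_graph_b m n E ->
  exists a b, (forall i k, a i k < b i k)%R /\ E = box_graph a b.
Proof.
move/is_box_graphP => [a [b [lt_ab edge]]]; exists a, b; split=> //.
apply/setP => [[i j]]; rewrite [in RHS]inE /=.
apply/idP/andP => [/edge [/eqP -> /PbP] // | [/eqP neq_ij /PbP meet]].
exact/edge.
Qed.

Lemma num_box_graphs_gt0 : 0 < num_box_graphs m n.
Proof.
rewrite card_gt0; apply/set0Pn; exists (box_graph (fun _ _ => 0%R) (fun _ _ => 1%R)).
by rewrite inE; apply: box_graph_is_box_graph => *; lra.
Qed.

Definition endpoint a b (k : 'I_m) (e : 'I_n * bool) : R :=
  if e.2 then b e.1 k else a e.1 k.

(* Codes: a rank in [0, 2n] for each coordinate and each of the 2n endpoints. *)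
Definition endpoint_code := {ffun 'I_m * ('I_n * bool) -> 'I_(#|{: 'I_n * bool}|).+1}.

Definition rank_code a b : endpoint_code :=
  [ffun ke => Ordinal (rank_below_lt (endpoint a b ke.1) (endpoint a b ke.1 ke.2))].

Definition code_graph (c : endpoint_code) : {set 'I_n * 'I_n} :=
  [set ij | (ij.1 != ij.2) && [forall k, (c (k, (ij.1, false)) <= c (k, (ij.2, true)))
                                      && (c (k, (ij.2, false)) <= c (k, (ij.1, true)))]].

Lemma box_graph_code a b : (forall i k, a i k <= b i k)%R ->
  box_graph a b = code_graph (rank_code a b).
Proof.
move=> le_ab; apply/setP => [[i j]]; rewrite !inE /=; congr (_ && _).
apply/PbP/forallP => [meet k | ranks].
  have [le_ij le_ji] := (boxes_intersectP (le_ab i) (le_ab j)).1 meet k.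
  by rewrite !ffunE /=; apply/andP; split; apply/rank_below_mono.
apply/(boxes_intersectP (le_ab i) (le_ab j)) => k.
have /andP[le_ij le_ji] := ranks k; rewrite !ffunE /= in le_ij le_ji.
split; [exact: (rank_below_mono _ (i, false) (j, true)).2 le_ij
       | exact: (rank_below_mono _ (j, false) (i, true)).2 le_ji].
Qed.

Lemma num_box_graphs_upper : num_box_graphs m n <= expn (n * 2).+1 (m * (n * 2)).
Proof.
have sub : [set E | is_box_graph_b m n E] \subset code_graph @: [set: endpoint_code].
  apply/subsetP => E; rewrite inE => /is_box_graph_witness [a [b [lt_ab ->]]].
  rewrite (@box_graph_code a b) => [|i k]; last exact: Rlt_le.
  by apply: imset_f; rewrite inE.
apply: (leq_trans (subset_leq_card sub)); apply: (leq_trans (leq_imset_card _ _)).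
by rewrite cardsT card_ffun !card_prod !card_ord card_bool.
Qed.
End BoxGraph.
Arguments box_graph {m n} a b.
Arguments box_graph_is_box_graph {m n} a b.

(* Vertices split into m * 2s rulers u (coordinate u / 2s, position u mod 2s)
   followed by r free boxes f.  Ruler u occupies [2j, 2j+1] in its coordinate
   j = u mod 2s and [-1, 4s+2] elsewhere; free box f occupies [2p, 2(s+q)+1]
   in coordinate k, where (p, q) = c f k is its choice of ends. *)
Section GridConstruction.
Variables m s r : nat.

Definition grid_choice := {ffun 'I_r -> {ffun 'I_m -> 'I_s * 'I_s}}.

Definition grid_lo (c : grid_choice) (y : 'I_(m * (s * 2) + r)) (k : 'I_m) : R :=
  match fintype.split y with
  | inl u => if u %/ (s * 2) == k then INR (2 * (u %% (s * 2))) else (-1)%R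
  | inr f => INR (2 * (c f k).1)
  end.

Definition grid_hi (c : grid_choice) (y : 'I_(m * (s * 2) + r)) (k : 'I_m) : R :=
  match fintype.split y with
  | inl u => if u %/ (s * 2) == k then INR (2 * (u %% (s * 2)) + 1) else INR (4 * s + 2)
  | inr f => INR (2 * (s + (c f k).2) + 1)
  end.

Lemma grid_lo_hi c y k : (grid_lo c y k < grid_hi c y k)%R.
Proof.
rewrite /grid_lo /grid_hi; case: fintype.split => [u|f].
  by case: eqP => _; [apply/INR_ltP; lia | have := pos_INR (4 * s + 2); lra].
by have := ltn_ord (c f k).1 => ?; apply/INR_ltP; lia.
Qed.

Definition grid_graph (c : grid_choice) : {set 'I_(m * (s * 2) + r) * 'I_(m * (s * 2) + r)} :=
  box_graph (grid_lo c) (grid_hi c).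

Lemma grid_meet c (f : 'I_r) (k : 'I_m) (u : 'I_(m * (s * 2))) : u %/ (s * 2) = k ->
  ((rshift (m * (s * 2)) f, lshift r u) \in grid_graph c) =
  ((c f k).1 <= u %% (s * 2) <= s + (c f k).2).
Proof.
move=> u_k; have le_grid y k' := Rlt_le _ _ (grid_lo_hi c y k').
rewrite inE /=; have -> /= : rshift (m * (s * 2)) f != lshift r u.
  by apply/eqP => /(congr1 val) /=; have := ltn_ord u; lia.
apply/PbP/idP => [/(boxes_intersectP (le_grid _) (le_grid _)) /(_ k) | /andP[le_p le_q]].
  rewrite /grid_lo /grid_hi !(unsplitK (inl _)) !(unsplitK (inr _)) /= u_k eqxx.
  by case=> /INR_leP le_p /INR_leP le_q; apply/andP; split; lia.
apply/(boxes_intersectP (le_grid _) (le_grid _)) => k'.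
rewrite /grid_lo /grid_hi !(unsplitK (inl _)) !(unsplitK (inr _)) /= u_k.
case: eqP => [/val_inj <- | _]; first by split; apply/INR_leP; lia.
split; first by have := ltn_ord (c f k').1 => ?; apply/INR_leP; lia.
by have := pos_INR (2 * (s + (c f k').2) + 1); lra.
Qed.

(* The window {j < 2s | p <= j <= s + q} determines p < s and q < s, so
   distinct choices give distinct graphs. *)
Lemma grid_graph_inj : injective grid_graph.
Proof.
move=> c c' eq_graph; apply/ffunP => f; apply/ffunP => k.
have same_window j : j < s * 2 ->
    ((c f k).1 <= j <= s + (c f k).2) = ((c' f k).1 <= j <= s + (c' f k).2).
  move=> lt_j; have lt_u : k * (s * 2) + j < m * (s * 2).
    by have := ltn_ord k; nia.
  have u_k : Ordinal lt_u %/ (s * 2) = k by rewrite /= divnMDl ?divn_small ?addn0 //; lia.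
  have u_j : Ordinal lt_u %% (s * 2) = j by rewrite /= modnMDl modn_small.
  by rewrite -u_j -(grid_meet c f k _ u_k) eq_graph (grid_meet c' f k _ u_k).
case: (c f k) same_window => p q; case: (c' f k) => p' q' /= same_window.
have := ltn_ord p; have := ltn_ord q; have := ltn_ord p'; have := ltn_ord q' => *.
(* Testing the window at p, p', s + q and s + q' pins down both ends. *)
have w_p := same_window p ltac:(lia); have w_p' := same_window p' ltac:(lia).
have w_q := same_window (s + q) ltac:(lia); have w_q' := same_window (s + q') ltac:(lia).
have eq_p : p = p' :> nat by lia.
have eq_q : q = q' :> nat by lia.
by congr pair; apply: val_inj.
Qed.

Lemma num_box_graphs_lower : expn (expn (s * s) m) r <= num_box_graphs m (m * (s * 2) + r).
Proof.
have -> : expn (expn (s * s) m) r = #|grid_graph @: [set: grid_choice]|.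
  by rewrite (card_imset _ grid_graph_inj) cardsT !card_ffun card_prod !card_ord.
apply/subset_leq_card/subsetP => _ /imsetP [c _ ->].
by rewrite inE; apply: box_graph_is_box_graph => y k; apply: grid_lo_hi.
Qed.
End GridConstruction.

(* Logarithmic upper bound, using 2n + 1 <= 3n. *)
Lemma ln_num_box_graphs_upper m n : 1 <= n ->
  (ln (INR (num_box_graphs m n)) <= 2 * INR m * INR n * (ln (INR n) + ln 3))%R.
Proof.
move=> n_gt0; have n_ge1 : (1 <= INR n)%R by apply/(INR_leP 1).
have N_le : (INR (num_box_graphs m n) <= (INR n * 3) ^ (m * (n * 2)))%R.
  apply: (Rle_trans _ (INR (expn (n * 2).+1 (m * (n * 2))))).
    exact/INR_leP/num_box_graphs_upper.
  rewrite INR_expn; apply: pow_incr; split; first exact: pos_INR.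
  by rewrite S_INR mult_INR /=; lra.
have N_pos : (0 < INR (num_box_graphs m n))%R.
  by apply/(INR_ltP 0)/num_box_graphs_gt0.
apply: (Rle_trans _ _ _ (ln_le_mono N_pos N_le)).
by rewrite ln_pow ?ln_mult ?mult_INR /=; try lra; apply: Req_le; ring.
Qed.

Lemma ln_num_box_graphs_grid m s r : 1 <= s ->
  (2 * INR m * INR r * ln (INR s) <= ln (INR (num_box_graphs m (m * (s * 2) + r))))%R.
Proof.
move=> s_gt0; have s_pos : (0 < INR s)%R by apply/(INR_ltP 0).
have count_pos : (0 < INR (expn (expn (s * s) m) r))%R.
  by rewrite !INR_expn mult_INR; do 2 apply: pow_lt; apply: Rmult_lt_0_compat.
have s2_pos : (0 < INR s * INR s)%R by apply: Rmult_lt_0_compat.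
have := ln_le_mono count_pos (proj2 (INR_leP _ _) (num_box_graphs_lower m s r)).
rewrite !INR_expn mult_INR ln_pow ?ln_pow ?ln_mult //; last exact: pow_lt.
by apply: Rle_trans; apply: Req_le; ring.
Qed.

Lemma grid_parameters m n t : 1 <= m -> 1 <= t -> 4 * m * t <= n ->
  exists s r, [/\ n = m * (s * 2) + r, 1 <= s, n <= s * (4 * m * t) & n * t <= r * t + n].
Proof.
move=> m_gt0 t_gt0 n_large; have d_gt0 : 0 < m * t * 2 by lia.
exists (n %/ (m * t * 2)), (n - m * (n %/ (m * t * 2) * 2)).
have := leq_divM n (m * t * 2); have := ltn_ceil n d_gt0.
move: (n %/ (m * t * 2)) => s lt_n le_n.
have s_gt0 : 0 < s by nia.
have le_ms : m * (s * 2) * t <= n by nia.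
have le_ms' : m * (s * 2) <= n by apply: leq_trans le_ms; rewrite leq_pmulr.
have le_s : s.+1 * (m * t * 2) <= s * (4 * m * t) by nia.
have le_nt : n <= n * t by rewrite leq_pmulr.
split=> //; [lia | lia | rewrite mulnBl; lia].
Qed.

Lemma ln_num_box_graphs_lower m n t : 1 <= m -> 1 <= t -> 4 * m * t <= n ->
  (2 * INR m * INR n * (1 - / INR t) * (ln (INR n) - ln (INR (4 * m * t)))
     <= ln (INR (num_box_graphs m n)))%R.
Proof.
move=> m_gt0 t_gt0 n_large.
have [s [r [n_eq s_gt0 n_le n_t]]] := @grid_parameters m n t m_gt0 t_gt0 n_large.
have t_ge1 : (1 <= INR t)%R by apply/(INR_leP 1).
have s_ge1 : (1 <= INR s)%R by apply/(INR_leP 1).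
have m_ge0 : (0 <= INR m)%R by apply: pos_INR.
have K_pos : (0 < INR (4 * m * t))%R by apply/(INR_ltP 0); nia.
have ln_s : (ln (INR n) - ln (INR (4 * m * t)) <= ln (INR s))%R.
  suff : (ln (INR n) <= ln (INR s * INR (4 * m * t)))%R by rewrite ln_mult; lra.
  by apply: ln_le_mono; [apply/(INR_ltP 0); lia | rewrite -mult_INR; apply/INR_leP].
have ln_s_ge0 : (0 <= ln (INR s))%R by rewrite -ln_1; apply: ln_le_mono; lra.
have r_large : (INR n * (1 - / INR t) <= INR r)%R.
  have le_nt : (INR n * INR t <= INR r * INR t + INR n)%R.
    by rewrite -!mult_INR -plus_INR; apply/INR_leP.
  apply: (Rmult_le_reg_r (INR t)); first lra.
  have -> : (INR n * (1 - / INR t) * INR t = INR n * INR t - INR n)%R by field; lra.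
  lra.
have frac_ge0 : (0 <= INR n * (1 - / INR t))%R.
  apply: Rmult_le_pos; first exact: pos_INR.
  have : (/ INR t <= 1)%R by rewrite -Rinv_1; apply: Rinv_le_contravar; lra.
  lra.
have := @ln_num_box_graphs_grid m s r s_gt0; rewrite -n_eq; apply: Rle_trans.
set A := (INR n * (1 - / INR t))%R in r_large frac_ge0.
have le_A : (A * (ln (INR n) - ln (INR (4 * m * t))) <= INR r * ln (INR s))%R.
  apply: (Rle_trans _ (A * ln (INR s))); first exact: Rmult_le_compat_l.
  exact: Rmult_le_compat_r.
have := Rmult_le_compat_l (2 * INR m) _ _ ltac:(lra) le_A.
by rewrite /A !Rmult_assoc.
Qed.

Definition exponent_error (m n : nat) : R :=
  (ln (INR (num_box_graphs m n)) / (INR n * ln (INR n)) - 2 * INR m)%R.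

Lemma exponent_error_spec m n : 2 <= n ->
  INR (num_box_graphs m n) = Rpower (INR n) ((2 * INR m + exponent_error m n) * INR n).
Proof.
move=> n_ge2; have ln_pos := @ln_INR_pos n n_ge2.
have n_pos : (0 < INR n)%R by apply/(INR_ltP 0); lia.
rewrite /Rpower /exponent_error.
have -> : ((2 * INR m + (ln (INR (num_box_graphs m n)) / (INR n * ln (INR n)) - 2 * INR m))
   * INR n * ln (INR n) = ln (INR (num_box_graphs m n)))%R by field; lra.
by rewrite exp_ln //; apply/(INR_ltP 0)/num_box_graphs_gt0.
Qed.

Lemma exponent_error_upper m n : 2 <= n ->
  (exponent_error m n <= 2 * INR m * ln 3 / ln (INR n))%R.
Proof.
move=> n_ge2; have ln_pos := @ln_INR_pos n n_ge2.
have n_pos : (0 < INR n)%R by apply/(INR_ltP 0); lia.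
have upper := @ln_num_box_graphs_upper m n (ltnW n_ge2).
rewrite /exponent_error; apply: (Rmult_le_reg_r (INR n * ln (INR n))).
  exact: Rmult_lt_0_compat.
have -> : ((ln (INR (num_box_graphs m n)) / (INR n * ln (INR n)) - 2 * INR m)
   * (INR n * ln (INR n)) = ln (INR (num_box_graphs m n)) - 2 * INR m * INR n * ln (INR n))%R.
  by field; lra.
have -> : (2 * INR m * ln 3 / ln (INR n) * (INR n * ln (INR n)) = 2 * INR m * INR n * ln 3)%R.
  by field; lra.
lra.
Qed.

Lemma exponent_error_lower m n t : 1 <= m -> 1 <= t -> 4 * m * t <= n -> 2 <= n ->
  (- (2 * INR m / INR t) - 2 * INR m * ln (INR (4 * m * t)) / ln (INR n)
     <= exponent_error m n)%R.
Proof.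
move=> m_gt0 t_gt0 n_large n_ge2; have ln_pos := @ln_INR_pos n n_ge2.
have n_pos : (0 < INR n)%R by apply/(INR_ltP 0); lia.
have t_pos : (0 < INR t)%R by apply/(INR_ltP 0).
have lower := @ln_num_box_graphs_lower m n t m_gt0 t_gt0 n_large.
set C := ln (INR (4 * m * t)) in lower *; set L := ln (INR n) in lower ln_pos *.
have C_ge0 : (0 <= C)%R.
  by rewrite /C -ln_1; apply: ln_le_mono; [lra | apply/(INR_leP 1); nia].
have m_ge0 : (0 <= INR m)%R by apply: pos_INR.
rewrite /exponent_error -/L; apply: (Rmult_le_reg_r (INR n * L)).
  exact: Rmult_lt_0_compat.
have -> : ((ln (INR (num_box_graphs m n)) / (INR n * L) - 2 * INR m) * (INR n * L)
   = ln (INR (num_box_graphs m n)) - 2 * INR m * INR n * L)%R by field; lra.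
apply: Rle_trans (Rplus_le_compat_r _ _ _ lower).
have -> : ((- (2 * INR m / INR t) - 2 * INR m * C / L) * (INR n * L)
   = - (2 * INR m * INR n * L / INR t) - 2 * INR m * INR n * C)%R by field; lra.
have -> : (2 * INR m * INR n * (1 - / INR t) * (L - C) + - (2 * INR m * INR n * L)
   = - (2 * INR m * INR n * L / INR t) - 2 * INR m * INR n * C
     + 2 * INR m * INR n * C / INR t)%R by field; lra.
have : (0 <= 2 * INR m * INR n * C / INR t)%R.
  apply: Rmult_le_pos; last by apply/Rlt_le/Rinv_0_lt_compat.
  by apply: Rmult_le_pos; [nra | lra].
lra.
Qed.

Lemma div_ln_eventually_lt c e : (0 < e)%R ->
  exists N, forall n, N <= n -> (c / ln (INR n) < e)%R.
Proof.
move=> e_pos; have [N0 N0_large] := INR_unbounded (exp (c / e)).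
exists (maxn N0 2) => n; rewrite geq_max => /andP[le_N0 n_ge2].
have ln_pos := @ln_INR_pos n n_ge2.
have ln_large : (c / e < ln (INR n))%R.
  rewrite -[X in (X < _)%R]ln_exp; apply: ln_increasing; first exact: exp_pos.
  by apply: Rlt_le_trans N0_large _; apply/INR_leP.
apply: (Rmult_lt_reg_r (ln (INR n))) => //.
have -> : (c / ln (INR n) * ln (INR n) = c)%R by field; lra.
have := Rmult_lt_compat_l _ _ _ e_pos ln_large.
by have -> : (e * (c / e) = c)%R by field; lra.
Qed.

(* Squeeze: choose t with 2m / t < e / 2, then n large enough. *)
Lemma exponent_error_cv m : 1 <= m -> Un_cv (exponent_error m) 0.
Proof.
move=> m_gt0 e e_pos.
have m_pos : (0 < INR m)%R by apply/(INR_ltP 0).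
have [t t_large] := INR_unbounded (4 * INR m / e).
have e_t : (4 * INR m < e * INR t)%R.
  have := Rmult_lt_compat_l _ _ _ e_pos t_large.
  by have -> : (e * (4 * INR m / e) = 4 * INR m)%R by field; lra.
have t_pos : (0 < INR t)%R by nra.
have t_gt0 : 1 <= t by apply/(INR_ltP 0).
have t_bound : (2 * INR m / INR t < e / 2)%R.
  apply: (Rmult_lt_reg_r (INR t)) => //.
  have -> : (2 * INR m / INR t * INR t = 2 * INR m)%R by field; lra.
  lra.
have [N1 small_up] := @div_ln_eventually_lt (2 * INR m * ln 3) e e_pos.
have [N2 small_low] := @div_ln_eventually_lt (2 * INR m * ln (INR (4 * m * t))) (e / 2)
  ltac:(lra).
exists (maxn (maxn N1 N2) (4 * m * t + 2)) => n /leP.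
rewrite !geq_max => /andP[/andP[le_N1 le_N2] n_large].
rewrite /R_dist Rminus_0_r; apply: Rabs_def1.
  apply: Rle_lt_trans (small_up n le_N1).
  apply: exponent_error_upper; lia.
have := small_low n le_N2; have := @exponent_error_lower m n t m_gt0 t_gt0 ltac:(lia) ltac:(lia).
lra.
Qed.

Theorem corollary2p8 (m : nat) (hm : (1 <= m)%nat) :
  exists eps : nat -> R, Un_cv eps 0%R /\
    forall n : nat, (2 <= n)%nat ->
      INR (num_box_graphs m n) = Rpower (INR n) ((2 * INR m + eps n) * INR n).
Proof.
exists (exponent_error m); split; first exact: exponent_error_cv.
exact: exponent_error_spec.
Qed.
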